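(* Let $N=\{1,\dots,n\}$ with $n\ge 2$ and $\mathcal{D}=\mathbb{R}^n_+$. A rule $R:\mathcal{D}\to\mathbb{R}^n_+$ satisfies scale invariance, downstream impartiality, upstream invariance, and equal treatment of equal upstream total inflow if and only if it is a partial compromise rule, i.e. there exists $\delta\in[0,1]$ such that for each $e\in\mathcal{D}$, $R(e)=\delta R^{NT}(e)+(1-\delta)R^{EPT}(e)$.
   Context: Agents $1,\dots,n$ are located along a linear river, lower index meaning more upstream; agent $i$ has river inflow $e_i\ge 0$, and $e=(e_1,\dots,e_n)\in\mathcal{D}=\mathbb{R}^n_+$. An allocation for $e$ is $x\in\mathbb{R}^n_+$ with $\sum_{i=1}^n x_i=\sum_{i=1}^n e_i$ and $\sum_{i=1}^k x_i\le\sum_{i=1}^k e_i$ for each $k=1,\dots,n-1$. A rule is a map $R:\mathcal{D}\to\mathbb{R}^n_+$ assigning to each $e$ an allocation $R(e)$ for $e$. No-transfer rule: $R^{NT}_i(e)=e_i$ for all $i$. Egalitarian partial-transfer rule: $R^{EPT}_i(e)=\left[1-\frac{n-i}{n-1}\right]e_i+\frac{1}{n-1}\sum_{k<i}e_k$ for all $i\in N$. Axioms: Scale invariance: for each $e\in\mathcal{D}$ and each $\gamma\in\mathbb{R}_+$, $R(\gamma e)=\gamma R(e)$. Upstream invariance: for each $e,e'\in\mathcal{D}$ such that $e_i<e'_i$ for some $i\in N$ and $e_j=e'_j$ for all $j\ne i$, we have $R_k(e)=R_k(e')$ for each $k<i$. Downstream impartiality: for each $e,e'\in\mathcal{D}$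 such that $e_i<e'_i$ for some $i\in N$ and $e_j=e'_j$ for all $j\ne i$, and for each $k,l>i$ with $e_k=e_l$, we have $R_k(e')-R_k(e)=R_l(e')-R_l(e)$. Equal treatment of equal upstream total inflow: for each $e,e'\in\mathcal{D}$ and each $i\in N$, if $e_i=e'_i$ and $\sum_{j<i}e_j=\sum_{j<i}e'_j$, then $R_i(e)=R_i(e')$. *)

(* Agents are indexed by 'I_n = {0,...,n-1}; agent i : 'I_n
   corresponds to agent i+1 of the paper. Reals: an arbitrary R : realType. *)
From HB Require Import structures.
From mathcomp Require Import all_boot all_order all_algebra.
From mathcomp Require Import all_reals.
Set Implicit Arguments. Unset Strict Implicit. Unset Printing Implicit Defensive.
Import Order.TTheory GRing.Theory Num.Theory.
Local Open Scope ring_scope.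

Section River.
Variables (R : realType) (n : nat).

Definition profile := 'I_n -> R.

Definition inD (e : profile) : Prop := forall i, 0 <= e i.

Definition allocation (e x : profile) : Prop :=
  (forall i, 0 <= x i) /\
  \sum_(i < n) x i = \sum_(i < n) e i /\
  (forall k : nat, (k.+1 <= n.-1)%N ->
     \sum_(i < n | (i < k.+1)%N) x i <= \sum_(i < n | (i < k.+1)%N) e i).

Definition is_rule (F : profile -> profile) : Prop :=
  forall e, inD e -> allocation e (F e).

Definition R_NT (e : profile) : profile := fun i => e i.

Definition R_EPT (e : profile) : profile := fun i =>
  (1 - ((n - (i.+1))%N%:R / (n.-1)%:R)) * e i
  + (n.-1)%:R^-1 * \sum_(k < n | (k < i)%N) e k.

Definition scale_invariance (F : profile -> profile) : Prop :=
  forall e, inD e -> forall g : R, 0 <= g ->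
    F (fun j => g * e j) = (fun j => g * F e j).

Definition incr_at (e e' : profile) (i : 'I_n) : Prop :=
  e i < e' i /\ forall j, j != i -> e j = e' j.

Definition upstream_invariance (F : profile -> profile) : Prop :=
  forall e e', inD e -> inD e' -> forall i, incr_at e e' i ->
    forall k : 'I_n, (k < i)%N -> F e k = F e' k.

Definition downstream_impartiality (F : profile -> profile) : Prop :=
  forall e e', inD e -> inD e' -> forall i, incr_at e e' i ->
    forall k l : 'I_n, (i < k)%N -> (i < l)%N -> e k = e l ->
      F e' k - F e k = F e' l - F e l.

Definition equal_treatment_upstream (F : profile -> profile) : Prop :=
  forall e e', inD e -> inD e' -> forall i : 'I_n,
    e i = e' i ->
    \sum_(j < n | (j < i)%N) e j = \sum_(j < n | (j < i)%N) e' j ->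
    F e i = F e' i.

Definition partial_compromise (F : profile -> profile) : Prop :=
  exists delta : R, 0 <= delta <= 1 /\
    forall e, inD e -> forall i,
      F e i = delta * R_NT e i + (1 - delta) * R_EPT e i.

End River.

From mathcomp Require Import all_boot all_order all_algebra all_reals.
From mathcomp Require Import ring lra zify.
Import Order.TTheory GRing.Theory Num.Theory.
Local Open Scope ring_scope.

(* By equal treatment the award of agent k depends only on e_k and the
   upstream total S_k = upsum e k, and by scale invariance it is c_k S_k
   when e_k = 0, where c_k is k's award when one unit flows in at the
   source.  Removing e_k leaves upstream awards unchanged and changes each
   downstream award by c_j e_k (backward induction), so budget balance
   forces R_k(e) = (1 - sum_(j > k) c_j) e_k + c_k S_k.  Downstream
   impartiality makes all c_j with j > 0 equal to one c, and
   delta = 1 - (n - 1) c.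
   Conversely, every rule that is affine in (e_k, S_k) with a common slope
   in S_k satisfies all four axioms. *)

Section UpstreamSum.
Context {R : realType} {n : nat}.
Implicit Types (e : profile R n) (i j k : 'I_n).

Definition upsum e (k : nat) : R := \sum_(j < n | (j < k)%N) e j.

Definition head_unit : profile R n := fun j => ((j : nat) == 0%N)%:R.

Definition zero_at e k : profile R n := fun j => if j == k then 0 else e j.

Lemma upsum0 e : upsum e 0 = 0.
Proof. by rewrite /upsum big_pred0. Qed.

Lemma upsum_total e : upsum e n = \sum_(j < n) e j.
Proof. by apply: eq_bigl => j; rewrite ltn_ord. Qed.

Lemma upsum_ge0 e (k : nat) : inD e -> 0 <= upsum e k.
Proof. by move=> De; apply: sumr_ge0 => j _; apply: De. Qed.

Lemma upsumZ (g : R) e (k : nat) : upsum (fun j => g * e j) k = g * upsum e k.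
Proof. by rewrite /upsum mulr_sumr. Qed.

Lemma upsum_agree_le {e e' : profile R n} {i : 'I_n} {k : nat} :
  (forall j, j != i -> e j = e' j) -> (k <= i)%N -> upsum e k = upsum e' k.
Proof.
move=> agree ki; apply: eq_bigr => j jk; apply: agree.
by apply: contraTneq jk => ->; rewrite -leqNgt.
Qed.

Lemma upsum_agree_gt {e e' : profile R n} {i : 'I_n} {k : nat} :
  (forall j, j != i -> e j = e' j) -> (i < k)%N ->
  upsum e' k = upsum e k + (e' i - e i).
Proof.
move=> agree ik; rewrite /upsum (bigD1 i) // [in RHS](bigD1 i) //=.
rewrite [in RHS](eq_bigr e') => [|j /andP[_ ji]]; last exact: agree.
ring.
Qed.

Lemma head_unit_inD : inD head_unit.
Proof. by move=> j; rewrite ler0n. Qed.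

Lemma upsum_head_unit k : (0 < k)%N -> upsum head_unit k = 1.
Proof.
move=> k_gt0; pose i0 : 'I_n := Ordinal (ltn_trans k_gt0 (ltn_ord k)).
rewrite /upsum (bigD1 i0) //= big1 ?addr0 // => j /andP[_].
by rewrite -val_eqE /head_unit /= => /negbTE ->.
Qed.

Lemma zero_at_inD e k : inD e -> inD (zero_at e k).
Proof. by move=> De j; rewrite /zero_at; case: eqP. Qed.

Lemma zero_at_agree e k j : j != k -> e j = zero_at e k j.
Proof. by rewrite /zero_at => /negbTE ->. Qed.

Lemma zero_at_id e k : zero_at e k k = 0.
Proof. by rewrite /zero_at eqxx. Qed.

End UpstreamSum.

Section AffineRule.
Context {R : realType} {n : nat}.
Variables (a : 'I_n -> R) (b : R) (F : profile R n -> profile R n).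
Hypothesis F_affine :
  forall e, inD e -> forall i, F e i = a i * e i + b * upsum e i.

Lemma affine_scale_invariance : scale_invariance F.
Proof.
move=> e De g g_ge0; apply: boolp.funext => i.
have Dge : inD (fun j => g * e j) by move=> j; rewrite mulr_ge0.
by rewrite !F_affine // upsumZ; ring.
Qed.

Lemma affine_upstream_invariance : upstream_invariance F.
Proof.
move=> e e' De De' i [_ agree] k ki.
have k_ne_i : k != i by rewrite neq_ltn ki.
by rewrite !F_affine // (agree k k_ne_i) (upsum_agree_le agree (ltnW ki)).
Qed.

Lemma affine_downstream_impartiality : downstream_impartiality F.
Proof.
move=> e e' De De' i [_ agree] k l ik il ekl.
have [k_ne_i l_ne_i] : k != i /\ l != i by rewrite !neq_ltn ik il !orbT.
rewrite !F_affine // -(agree k k_ne_i) -(agree l l_ne_i) ekl.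
rewrite (upsum_agree_gt agree ik) (upsum_agree_gt agree il); ring.
Qed.

Lemma affine_equal_treatment_upstream : equal_treatment_upstream F.
Proof. by move=> e e' De De' i ei Si; rewrite !F_affine // ei /upsum Si. Qed.

End AffineRule.

Section Necessity.
Context {R : realType} {n : nat}.
Variable F : profile R n -> profile R n.
Hypotheses (F_rule : is_rule F) (F_SI : scale_invariance F)
  (F_ET : equal_treatment_upstream F).
Implicit Types (e : profile R n) (j k : 'I_n).

Definition unit_share (j : 'I_n) : R := F head_unit j.

Lemma rule_zero : F (fun _ => 0) = fun _ => 0.
Proof.
have := @F_SI (fun _ => 0) (fun _ => lexx 0) 0 (lexx 0).
have -> : (fun _ : 'I_n => 0 * 0) = (fun _ => 0 :> R).
  by apply: boolp.funext => j; rewrite mulr0.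
move=> ->; apply: boolp.funext => j; exact: mul0r.
Qed.

Lemma rule_at_empty_inflow e k : inD e -> e k = 0 ->
  F e k = unit_share k * upsum e k.
Proof.
move=> De ek0; set s := upsum e k.
have s_ge0 : 0 <= s by apply: upsum_ge0.
have Ds : inD (fun j => s * head_unit j).
  by move=> j; apply: mulr_ge0 => //; apply: head_unit_inD.
rewrite (F_ET _ _ De Ds k).
- by rewrite F_SI ?head_unit_inD // mulrC.
- have [k0|k_gt0] := posnP k; last by rewrite ek0 /head_unit gtn_eqF ?mulr0.
  by rewrite /s k0 upsum0 mul0r.
- rewrite -/(upsum e k) -/(upsum _ k) upsumZ.
  have [k0|k_gt0] := posnP k; last by rewrite upsum_head_unit ?mulr1.
  by rewrite /s k0 !upsum0 mulr0.
Qed.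

Lemma rule_formula k e : inD e ->
  F e k = (1 - \sum_(j < n | (k < j)%N) unit_share j) * e k
          + unit_share k * upsum e k.
Proof.
move: e; have [m] := ubnP (n - k); elim: m k => // m IH k /ltnSE nk_le_m e De.
pose e0 := zero_at e k.
have De0 : inD e0 by apply: zero_at_inD.
have agree : forall j, j != k -> e j = e0 j by move=> j; apply: zero_at_agree.
have e0k : e0 k = 0 := zero_at_id e k.
have budget : \sum_(j < n) (F e j - F e0 j) = e k.
  rewrite sumrB (F_rule _ De).2.1 (F_rule _ De0).2.1 -!upsum_total.
  by rewrite (upsum_agree_gt agree (ltn_ord k)) e0k; ring.
have at_k : F e0 k = unit_share k * upsum e k.
  by rewrite rule_at_empty_inflow // (upsum_agree_le agree).
have others : \sum_(j < n | j != k) (F e j - F e0 j)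
            = \sum_(j < n | (k < j)%N) unit_share j * e k.
  rewrite big_mkcond [RHS]big_mkcond; apply: eq_bigr => j _.
  case: (ltngtP k j) => [kj|jk|/val_inj <-]; last by rewrite eqxx.
  - have nj_lt_m : (n - j < m)%N by move: (ltn_ord j) nk_le_m kj; lia.
    rewrite neq_ltn kj orbT !IH // -(agree j) ?neq_ltn ?kj ?orbT //.
    by rewrite (upsum_agree_gt agree kj) e0k; ring.
  - rewrite neq_ltn jk (F_ET _ _ De De0 j) ?subrr //.
      by apply: agree; rewrite neq_ltn jk.
    by rewrite -/(upsum e j) -/(upsum e0 j) (upsum_agree_le agree (ltnW jk)).
move: budget; rewrite (bigD1 k) //= others at_k -mulr_suml; lra.
Qed.

Lemma unit_share_eq : downstream_impartiality F ->
  forall j l : 'I_n, (0 < j)%N -> (0 < l)%N -> unit_share j = unit_share l.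
Proof.
move=> F_DI j l j_gt0 l_gt0.
pose i0 : 'I_n := Ordinal (ltn_trans j_gt0 (ltn_ord j)).
have incr : incr_at (fun _ => 0 : R) head_unit i0.
  split=> [|k]; first exact: ltr01.
  by rewrite -val_eqE /head_unit /= => /negbTE ->.
have := F_DI _ _ (fun _ => lexx 0) head_unit_inD _ incr _ _ j_gt0 l_gt0 erefl.
by rewrite rule_zero !subr0.
Qed.

Lemma rule_affine (c : R) : (forall j : 'I_n, (0 < j)%N -> unit_share j = c) ->
  forall e, inD e -> forall k : 'I_n,
  F e k = (1 - (n - k.+1)%:R * c) * e k + c * upsum e k.
Proof.
move=> share_c e De k; rewrite rule_formula //.
have -> : \sum_(j < n | (k < j)%N) unit_share j = (n - k.+1)%:R * c.
  rewrite (eq_bigr (fun _ => c)) => [|j kj]; last first.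
    by rewrite share_c // (leq_ltn_trans _ kj).
  rewrite (eq_bigl (fun j : 'I_n => true && (k.+1 <= j)%N)) //.
  by rewrite -(big_geq_mkord _ _ xpredT (fun=> c)) sumr_const_nat mulr_natl.
have [k0|k_gt0] := posnP k; first by rewrite k0 upsum0 !mulr0.
by rewrite share_c.
Qed.

End Necessity.

Lemma natr_pred_neq0 {R : realType} {n : nat} :
  (1 < n)%N -> (n.-1)%:R != 0 :> R.
Proof. by move=> n_gt1; rewrite pnatr_eq0 -lt0n -subn1 subn_gt0. Qed.

Lemma compromise_affine {R : realType} {n : nat} {delta c : R} :
  (1 < n)%N -> 1 - delta = (n.-1)%:R * c -> forall (e : profile R n) (i : 'I_n),
  delta * R_NT e i + (1 - delta) * R_EPT e i
  = (1 - (n - i.+1)%:R * c) * e i + c * upsum e i.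
Proof.
move=> n_gt1 delta_c e i.
have n1_neq0 : (n.-1)%:R != 0 :> R := natr_pred_neq0 n_gt1.
rewrite /R_NT /R_EPT -/(upsum e i) delta_c.
have -> : delta = 1 - (n.-1)%:R * c by lra.
by field.
Qed.

Theorem theorem5 (R : realType) (n : nat) (F : profile R n -> profile R n) :
  (2 <= n)%N -> is_rule F ->
  (scale_invariance F /\ downstream_impartiality F /\
   upstream_invariance F /\ equal_treatment_upstream F)
  <-> partial_compromise F.
Proof.
move=> n_gt1 F_rule; split.
- case=> F_SI [F_DI [_ F_ET]].
  pose i0 : 'I_n := Ordinal (ltnW n_gt1); pose i1 : 'I_n := Ordinal n_gt1.
  pose c := unit_share F i1.
  have F_affine := rule_affine F F_rule F_SI F_ET c
    (fun j j_gt0 => unit_share_eq F F_SI F_DI j i1 j_gt0 isT).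
  have share0 : F head_unit i0 = 1 - (n.-1)%:R * c.
    by rewrite F_affine ?head_unit_inD //= upsum0 subn1 mulr0 addr0 mulr1.
  exists (1 - (n.-1)%:R * c); split.
    have c_ge0 : 0 <= c := (F_rule _ head_unit_inD).1 i1.
    by rewrite -share0 (F_rule _ head_unit_inD).1 share0 lerBlDr lerDl mulr_ge0.
  have delta_c : 1 - (1 - (n.-1)%:R * c) = (n.-1)%:R * c := subKr _ _.
  by move=> e De i; rewrite F_affine // (compromise_affine n_gt1 delta_c).
- case=> delta [_ F_pc].
  have n1_neq0 : (n.-1)%:R != 0 :> R := natr_pred_neq0 n_gt1.
  pose c := (1 - delta) / (n.-1)%:R.
  have delta_c : 1 - delta = (n.-1)%:R * c by rewrite /c mulrC divfK.
  have F_affine e : inD e ->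
      forall i, F e i = (1 - (n - i.+1)%:R * c) * e i + c * upsum e i.
    by move=> De i; rewrite F_pc // (compromise_affine n_gt1 delta_c).
  split; first exact: affine_scale_invariance F_affine.
  split; first exact: affine_downstream_impartiality F_affine.
  split; first exact: affine_upstream_invariance F_affine.
  exact: affine_equal_treatment_upstream F_affine.
Qed.
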